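(* Let $r\in\mathbb{N}$ and suppose $S_N$ admits the Edgeworth expansion of order $r$, i.e. there are polynomials $P_1,\dots,P_r$ with $\mathbb{P}\big(\frac{S_N-NA}{\sqrt N}\leq z\big)-\mathfrak{N}(z)=\sum_{p=1}^rN^{-p/2}P_p(z)\mathfrak{n}(z)+o(N^{-r/2})$ uniformly in $z\in\mathbb{R}$. Then for every $c\in(0,r)$ and every sequence $(x_N)$ with $1\leq x_N\leq\sqrt{c\sigma^2\ln N}$, $$\lim_{N\to\infty}\frac{1-\mathbb{P}\Big(\frac{S_N-AN}{\sqrt{N}}\leq x_N\Big)}{1-\mathfrak{N}(x_N)}=1.$$
   Context: $X_1,X_2,\dots$ are real random variables, $S_N=\sum_{n=1}^N X_n$, $A\in\mathbb{R}$, $\sigma^2>0$, $\mathfrak{n}(y)=\frac{1}{\sqrt{2\pi\sigma^2}}e^{-y^2/(2\sigma^2)}$, $\mathfrak{N}(z)=\int_{-\infty}^z\mathfrak{n}(y)\,dy$. *)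

From HB Require Import structures.
From mathcomp Require Import all_boot all_order all_algebra.
From mathcomp Require Import all_classical all_reals all_analysis.
Set Implicit Arguments. Unset Strict Implicit. Unset Printing Implicit Defensive.
Import Order.TTheory GRing.Theory Num.Theory.
Import numFieldNormedType.Exports.
Local Open Scope classical_set_scope.
Local Open Scope ring_scope.

Definition gauss_n {R : realType} (sigma2 : R) (y : R) : R :=
  (Num.sqrt (2 * pi * sigma2))^-1 * expR (- (y ^+ 2) / (2 * sigma2)).

Definition gauss_N {R : realType} (sigma2 : R) (z : R) : R :=
  fine (\int[@lebesgue_measure R]_(y in `]-oo, z]) (gauss_n sigma2 y)%:E)%E.

Definition partial_sum {d} {T : measurableType d} {R : realType}
  (X : nat -> T -> R) (N : nat) (w : T) : R :=
  \sum_(1 <= n < N.+1) X n w.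

Definition normalized_cdf {d} {T : measurableType d} {R : realType}
  (P : probability T R) (X : nat -> T -> R) (A : R) (N : nat) (z : R) : R :=
  fine (P [set w | (partial_sum X N w - N%:R * A) / Num.sqrt N%:R <= z]).

Definition has_edgeworth_expansion {d} {T : measurableType d} {R : realType}
  (P : probability T R) (X : nat -> T -> R) (A sigma2 : R) (r : nat)
  (Poly : nat -> {poly R}) : Prop :=
  forall eps : R, 0 < eps -> \forall N \near \oo, forall z : R,
    `| normalized_cdf P X A N z - gauss_N sigma2 z
       - \sum_(1 <= p < r.+1) (Num.sqrt (N%:R : R)) ^- p * (Poly p).[z] * gauss_n sigma2 z |
    <= eps * (Num.sqrt (N%:R : R)) ^- r.

From HB Require Import structures.
From mathcomp Require Import all_boot all_order all_algebra.
From mathcomp Require Import all_classical all_reals all_analysis.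
From mathcomp Require Import ring lra.
Import Order.TTheory GRing.Theory Num.Theory.
Import numFieldNormedType.Exports.
Local Open Scope classical_set_scope.
Local Open Scope ring_scope.

(* For x >= 1 the Gaussian tail obeys the Mills-type lower bound
   1 - N(x) >= e^{-3/(2 sigma^2)} n(x) / x, obtained by integrating n over
   ]x, x + 1/x], where y^2 <= x^2 + 3.  Dividing the Edgeworth expansion at
   x = x_N by the tail, the correction terms, of size O(x^D n(x) / sqrt N) for
   some D, contribute O(x^{D+1} / sqrt N), which is O(1 / ln N) since
   x^2 = O(ln N), while the o(N^{-r/2}) remainder contributes at most
   eps * O(x e^{x^2/(2 sigma^2)} N^{-r/2}) = O(eps), because
   x^2 <= c sigma^2 ln N with c < r. *)

Section RealBounds.
Context {R : realType}.
Implicit Types (a b k c x y z s L : R) (m r : nat).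

Lemma pow_div_expR_le L m : 0 < L -> L ^+ m / expR L <= m.+1`!%:R / L.
Proof.
move=> L_gt0; have fact_gt0 : 0 < m.+1`!%:R :> R by rewrite ltr0n fact_gt0.
have -> : L ^+ m / expR L = L ^+ m.+1 / m.+1`!%:R * (m.+1`!%:R / L) / expR L.
  by rewrite exprSr; field; rewrite !gt_eqF ?expR_gt0.
rewrite ler_pdivrMr ?expR_gt0 // [leRHS]mulrC ler_pM2r ?divr_gt0 //.
by apply: le_trans (expR_ge1Dxn m (ltW L_gt0)); rewrite lerDr.
Qed.

Lemma mul_expRN_le L b : 0 < b -> L * expR (- (b * L)) <= b^-1.
Proof.
move=> b_gt0; rewrite expRN ler_pdivrMr ?expR_gt0 //.
rewrite -(ler_pM2l b_gt0) mulrA mulfV ?gt_eqF // mul1r.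
by apply: le_trans (expR_ge1Dx _); rewrite lerDr.
Qed.

Lemma pow_div_le_inv_ln a x s m : 1 < s -> 1 <= x -> x ^+ 2 <= a * ln s ->
  x ^+ m / s <= a ^+ m * m.+1`!%:R / ln s.
Proof.
move=> s_gt1 x_ge1 x_le; have L_gt0 : 0 < ln s by rewrite ln_gt0.
have s_gt0 : 0 < s := lt_trans ltr01 s_gt1.
have x_ge0 : 0 <= x := le_trans ler01 x_ge1.
have x_le_aL : x <= a * ln s by apply: le_trans x_le; rewrite expr2 ler_peMr.
have a_ge0 : 0 <= a.
  by rewrite -(pmulr_lge0 _ L_gt0); apply: le_trans x_le_aL.
apply: (@le_trans _ _ (a ^+ m * (ln s ^+ m / expR (ln s)))).
  rewrite lnK ?posrE // mulrA -exprMn ler_pM2r ?invr_gt0 //.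
  by rewrite lerXn2r // nnegrE mulr_ge0 // ltW.
rewrite -mulrA; apply: ler_wpM2l; [exact: exprn_ge0 | exact: pow_div_expR_le].
Qed.

Lemma mul_expR_sqr_div_le k c x s r : 0 < k -> 0 < c -> c < r%:R -> 0 < s ->
  1 <= x -> x ^+ 2 <= k * c * ln s ->
  x * expR (x ^+ 2 / k) / s ^+ r <= k * c / (r%:R - c).
Proof.
move=> k_gt0 c_gt0 c_lt_r s_gt0 x_ge1 x_le.
have x_ge0 : 0 <= x := le_trans ler01 x_ge1.
have x_le_kcL : x <= k * c * ln s by apply: le_trans x_le; rewrite expr2 ler_peMr.
have rc_gt0 : 0 < r%:R - c by rewrite subr_gt0.
have sr : s ^+ r = expR (r%:R * ln s) by rewrite expRM_natl lnK.
apply: (@le_trans _ _ (k * c * ln s * expR (c * ln s) / s ^+ r)).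
  rewrite ler_pM2r ?invr_gt0 ?exprn_gt0 //.
  by apply: ler_pM; rewrite ?expR_ge0 // ler_expR ler_pdivrMr // [_ * k]mulrC mulrA.
rewrite sr -expRN -!mulrA -expRD !ler_pM2l //.
rewrite (_ : _ + _ = - ((r%:R - c) * ln s)); last by ring.
exact: mul_expRN_le.
Qed.

Lemma sqr_le_addinv z y : 1 <= z -> z < y -> y <= z + z^-1 ->
  y ^+ 2 <= z ^+ 2 + 3.
Proof.
move=> z_ge1 z_lt_y y_le; have z_gt0 : 0 < z := lt_le_trans ltr01 z_ge1.
have zVz : z * z^-1 = 1 by rewrite mulfV ?gt_eqF.
have Vz_le1 : z^-1 <= 1 by rewrite invr_le1 ?unitfE ?gt_eqF.
have Vz_gt0 : 0 < z^-1 by rewrite invr_gt0.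
have : y ^+ 2 <= (z + z^-1) ^+ 2.
  by rewrite lerXn2r // nnegrE ?addr_ge0 // ltW // (lt_trans z_gt0).
rewrite sqrrD zVz; nra.
Qed.

End RealBounds.

Section PolyBounds.
Context {R : realType}.

Lemma norm_horner_le (p : {poly R}) x : 1 <= x ->
  `|p.[x]| <= (\sum_(i < size p) `|p`_i|) * x ^+ size p.
Proof.
move=> x_ge1; have x_ge0 : 0 <= x := le_trans ler01 x_ge1.
rewrite horner_coef mulr_suml; apply: le_trans (ler_norm_sum _ _ _) _.
apply: ler_sum => i _; rewrite normrM (ger0_norm (exprn_ge0 _ x_ge0)).
by apply: ler_wpM2l => //; apply: ler_weXn2l => //; apply: ltnW.
Qed.

Lemma poly_family_bound (P : nat -> {poly R}) r :
  exists2 B : R, 0 <= B & exists D, forall p x, (p <= r)%N -> 1 <= x ->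
    `|(P p).[x]| <= B * x ^+ D.
Proof.
have single_bound p : exists2 B : R, 0 <= B & exists D, forall x, 1 <= x ->
    `|(P p).[x]| <= B * x ^+ D.
  exists (\sum_(i < size (P p)) `|(P p)`_i|); first exact: sumr_ge0.
  by exists (size (P p)) => x; apply: norm_horner_le.
elim: r => [|r [B1 B1_ge0 [D1 IH]]].
  have [B B_ge0 [D HB]] := single_bound 0%N.
  by exists B => //; exists D => p x; rewrite leqn0 => /eqP ->; apply: HB.
have [B2 B2_ge0 [D2 HB2]] := single_bound r.+1.
exists (B1 + B2); first exact: addr_ge0.
exists (maxn D1 D2) => p x + x_ge1; have x_ge0 := le_trans ler01 x_ge1.
rewrite leq_eqVlt => /orP[/eqP -> | p_le].
  apply: le_trans (HB2 x x_ge1) _; apply: ler_pM; rewrite ?exprn_ge0 ?lerDr //.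
  by apply: ler_weXn2l; rewrite ?leq_maxr.
apply: le_trans (IH p x p_le x_ge1) _; apply: ler_pM; rewrite ?exprn_ge0 ?lerDl //.
by apply: ler_weXn2l; rewrite ?leq_maxl.
Qed.

Lemma edgeworth_correction_bound (P : nat -> {poly R}) r :
  exists2 B : R, 0 <= B & exists D, forall s x, 1 <= s -> 1 <= x ->
    `|\sum_(1 <= p < r.+1) s ^- p * (P p).[x]| <= B * x ^+ D / s.
Proof.
have [B B_ge0 [D HB]] := poly_family_bound P r.
exists (r%:R * B); first by rewrite mulr_ge0.
exists D => s x s_ge1 x_ge1; have s_gt0 : 0 < s := lt_le_trans ltr01 s_ge1.
apply: le_trans (ler_norm_sum _ _ _) _.
apply: (@le_trans _ _ (\sum_(1 <= p < r.+1) B * x ^+ D / s)).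
  apply: ler_sum_nat => p /andP[p_ge1 p_le].
  have s_pow_ge0 : 0 <= s ^- p by rewrite invr_ge0 exprn_ge0 // ltW.
  rewrite normrM (ger0_norm s_pow_ge0) [leRHS]mulrC.
  apply: ler_pM => //; last by apply: HB.
  by rewrite lef_pV2 ?posrE ?exprn_gt0 // ler_eXnr.
by rewrite sumr_const_nat subn1 /= -!mulrA mulr_natl.
Qed.
End PolyBounds.

Section Convergence.
Context {R : realType}.

Lemma cvg_div_ln (C : R) : (fun N : nat => C / ln N%:R) @ \oo --> 0.
Proof.
apply/cvgrPdist_le => e e_gt0; near=> N.
have Ce_ge0 : 0 <= `|C| / e := divr_ge0 (normr_ge0 C) (ltW e_gt0).
have N_ge : expR (`|C| / e + 1) <= N%:R by near: N; exact: nbhs_infty_ger.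
have N_gt0 : 0 < N%:R :> R := lt_le_trans (expR_gt0 _) N_ge.
have ln_ge : `|C| / e + 1 <= ln (N%:R : R) by rewrite -ler_expR lnK.
have ln_gt0 : 0 < ln (N%:R : R) by apply: (lt_le_trans _ ln_ge); lra.
have inv_ln_gt0 : 0 < (ln (N%:R : R))^-1 by rewrite invr_gt0.
rewrite sub0r normrN normrM (gtr0_norm inv_ln_gt0) ler_pdivrMr // mulrC.
by rewrite -ler_pdivrMr //; lra.
Unshelve. all: by end_near.
Qed.

Lemma cvg_from_eps_bound {a u : nat -> R} {l : R} (C : R) : u @ \oo --> 0 ->
  (forall eps, 0 < eps -> \forall N \near \oo, `|l - a N| <= u N + eps * C) ->
  a @ \oo --> l.
Proof.
move=> /cvgrPdist_le u_small bound; apply/cvgrPdist_le => e e_gt0.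
have e2_gt0 : 0 < e / 2 by rewrite divr_gt0.
have eps_gt0 : 0 < e / 2 / (`|C| + 1) by rewrite divr_gt0 // ltr_wpDl.
have epsC_le : e / 2 / (`|C| + 1) * C <= e / 2.
  apply: le_trans (ler_wpM2l (ltW eps_gt0) (ler_norm C)) _.
  by rewrite mulrAC ler_pdivrMr ?ltr_wpDl // ler_pM2l // lerDl.
near=> N.
have u_le : `|0 - u N| <= e / 2 by near: N; exact: u_small.
have a_le : `|l - a N| <= u N + e / 2 / (`|C| + 1) * C by near: N; exact: bound.
rewrite sub0r normrN in u_le; have := ler_norm (u N); lra.
Unshelve. all: by end_near.
Qed.

End Convergence.

Section GaussianTail.
Context {R : realType} {sigma2 : R}.
Hypothesis sigma2_gt0 : 0 < sigma2.

Lemma gauss_nE : gauss_n sigma2 = normal_pdf 0 (Num.sqrt sigma2).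
Proof.
rewrite normal_pdfE ?gt_eqF ?sqrtr_gt0 //; apply/funext => y.
rewrite /gauss_n /normal_peak /normal_fun subr0 sqr_sqrtr ?ltW //.
congr (_^-1 * expR _); first by congr Num.sqrt; rewrite -mulr_natr; ring.
by congr (_ / _); rewrite -mulr_natl; ring.
Qed.

Lemma gauss_n_gt0 y : 0 < gauss_n sigma2 y.
Proof.
by rewrite mulr_gt0 ?expR_gt0 // invr_gt0 sqrtr_gt0 !mulr_gt0 ?pi_gt0.
Qed.

Lemma invr_gauss_n y :
  (gauss_n sigma2 y)^-1 = Num.sqrt (2 * pi * sigma2) * expR (y ^+ 2 / (2 * sigma2)).
Proof. by rewrite /gauss_n invfM invrK mulNr expRN invrK. Qed.

Lemma gauss_N_tailE z :
  (1 - gauss_N sigma2 z)%:E = normal_prob 0 (Num.sqrt sigma2) `]z, +oo[.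
Proof.
rewrite /gauss_N gauss_nE -/(normal_prob _ _ _) -setCitvl probability_setC //.
rewrite EFinB fineK // ge0_fin_numE //.
by apply: le_lt_trans (probability_le1 _ _) _; rewrite ?ltry.
Qed.

Lemma gauss_tail_ge z : 1 <= z ->
  expR (- 3 / (2 * sigma2)) * gauss_n sigma2 z / z <= 1 - gauss_N sigma2 z.
Proof.
move=> z_ge1; have z_gt0 : 0 < z := lt_le_trans ltr01 z_ge1.
set h := expR (- 3 / (2 * sigma2)) * gauss_n sigma2 z.
have h_ge0 : 0 <= h by rewrite mulr_ge0 ?expR_ge0 ?ltW ?gauss_n_gt0.
rewrite -lee_fin gauss_N_tailE.
apply: (@le_trans _ _ (normal_prob 0 (Num.sqrt sigma2) `]z, (z + z^-1)%R])); last first.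
  by apply: le_measure; rewrite ?inE // => y /=; rewrite !in_itv /= andbT => /andP[].
have -> : (h / z)%:E = (\int[lebesgue_measure]_(y in `]z, (z + z^-1)%R]) h%:E)%E.
  rewrite integral_cst //= lebesgue_measure_itv /= lte_fin ltrDl invr_gt0 z_gt0.
  by rewrite -EFinB -EFinM addrAC subrr add0r.
rewrite /normal_prob -gauss_nE; apply: ge0_le_integral => //.
  apply/measurable_realfun.measurable_EFinP; rewrite gauss_nE.
  exact: measurable_funTS (measurable_normal_pdf _ _).
move=> y; rewrite /= in_itv /= => /andP[z_lt_y y_le]; rewrite lee_fin /h /gauss_n.
rewrite mulrCA ler_pM2l ?invr_gt0 ?sqrtr_gt0 ?mulr_gt0 ?pi_gt0 //.
rewrite -expRD ler_expR -mulrDl ler_pM2r ?invr_gt0 ?mulr_gt0 //.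
by rewrite lerNr opprD !opprK addrC sqr_le_addinv.
Qed.

Lemma gauss_tail_gt0 z : 1 <= z -> 0 < 1 - gauss_N sigma2 z.
Proof.
move=> z_ge1; apply: (lt_le_trans _ (gauss_tail_ge _ z_ge1)).
by rewrite divr_gt0 1?mulr_gt0 ?expR_gt0 ?gauss_n_gt0 // (lt_le_trans ltr01 z_ge1).
Qed.

Lemma invr_gauss_tail_le z : 1 <= z ->
  (1 - gauss_N sigma2 z)^-1 <= expR (3 / (2 * sigma2)) * z / gauss_n sigma2 z.
Proof.
move=> z_ge1; have z_gt0 : 0 < z := lt_le_trans ltr01 z_ge1.
have n_gt0 := gauss_n_gt0 z.
have bound_gt0 : 0 < expR (3 / (2 * sigma2)) * z / gauss_n sigma2 z.
  by rewrite divr_gt0 // mulr_gt0 ?expR_gt0.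
rewrite -[leRHS]invrK lef_pV2 ?posrE ?invr_gt0 ?gauss_tail_gt0 //.
have -> : (expR (3 / (2 * sigma2)) * z / gauss_n sigma2 z)^-1 =
    expR (- 3 / (2 * sigma2)) * gauss_n sigma2 z / z.
  by rewrite mulNr expRN; field; rewrite !gt_eqF ?expR_gt0.
exact: gauss_tail_ge.
Qed.

End GaussianTail.

Section EdgeworthTailRatio.
Context {R : realType} {sigma2 c : R} {r : nat}.
Hypotheses (sigma2_gt0 : 0 < sigma2) (c_gt0 : 0 < c) (c_lt_r : c < r%:R).

Let k := 2 * sigma2.
Let mills := expR (3 / k).

Lemma correction_tail_ratio_le (B : R) (D : nat) (s x S : R) :
  0 <= B -> 1 < s -> 1 <= x -> x ^+ 2 <= k * c * ln s -> `|S| <= B * x ^+ D / s ->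
  `|S * gauss_n sigma2 x / (1 - gauss_N sigma2 x)| <=
    mills * B * (k * c) ^+ D.+1 * D.+2`!%:R / ln s.
Proof.
move=> B_ge0 s_gt1 x_ge1 x_le S_le.
have s_gt0 : 0 < s := lt_trans ltr01 s_gt1.
have n_gt0 := gauss_n_gt0 sigma2_gt0 x.
have T_gt0 := gauss_tail_gt0 sigma2_gt0 _ x_ge1.
have Tinv_ge0 : 0 <= (1 - gauss_N sigma2 x)^-1 by rewrite invr_ge0 ltW.
rewrite normrM (ger0_norm Tinv_ge0) normrM (gtr0_norm n_gt0) -mulrA.
apply: (@le_trans _ _ (B * x ^+ D / s * (gauss_n sigma2 x * (mills * x / gauss_n sigma2 x)))).
  apply: ler_pM => //; first by rewrite mulr_ge0 ?invr_ge0 ?ltW.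
  by rewrite ler_pM2l //; apply: invr_gauss_tail_le.
have -> : B * x ^+ D / s * (gauss_n sigma2 x * (mills * x / gauss_n sigma2 x)) =
    mills * B * (x ^+ D.+1 / s) by rewrite exprSr; field; rewrite !gt_eqF.
apply: (@le_trans _ _ (mills * B * ((k * c) ^+ D.+1 * D.+2`!%:R / ln s))).
  by apply: ler_wpM2l; [rewrite mulr_ge0 ?expR_ge0 | exact: pow_div_le_inv_ln].
by rewrite !mulrA.
Qed.

Lemma remainder_tail_ratio_le (s x E eps : R) :
  0 < s -> 1 <= x -> x ^+ 2 <= k * c * ln s -> 0 <= eps -> `|E| <= eps * s ^- r ->
  `|E / (1 - gauss_N sigma2 x)| <=
    eps * (mills * Num.sqrt (2 * pi * sigma2) * (k * c / (r%:R - c))).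
Proof.
move=> s_gt0 x_ge1 x_le eps_ge0 E_le.
have T_gt0 := gauss_tail_gt0 sigma2_gt0 _ x_ge1.
have Tinv_ge0 : 0 <= (1 - gauss_N sigma2 x)^-1 by rewrite invr_ge0 ltW.
rewrite normrM (ger0_norm Tinv_ge0).
apply: (@le_trans _ _ (eps * s ^- r * (mills * x / gauss_n sigma2 x))).
  by apply: ler_pM => //; apply: invr_gauss_tail_le.
have -> : eps * s ^- r * (mills * x / gauss_n sigma2 x) =
    eps * (mills * Num.sqrt (2 * pi * sigma2) * (x * expR (x ^+ 2 / k) / s ^+ r)).
  by rewrite invr_gauss_n // /k; ring.
apply: ler_wpM2l => //; apply: ler_wpM2l; first by rewrite mulr_ge0 ?expR_ge0.
by apply: mul_expR_sqr_div_le; rewrite // /k mulr_gt0.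
Qed.

Lemma edgeworth_tail_ratio_bound (Poly : nat -> {poly R}) : exists C1 C2 : R,
  forall n x F eps : R, 1 < n -> 1 <= x -> x <= Num.sqrt (c * sigma2 * ln n) -> 0 <= eps ->
  `|F - gauss_N sigma2 x
     - \sum_(1 <= p < r.+1) Num.sqrt n ^- p * (Poly p).[x] * gauss_n sigma2 x|
    <= eps * Num.sqrt n ^- r ->
  `|1 - (1 - F) / (1 - gauss_N sigma2 x)| <= C1 / ln n + eps * C2.
Proof.
have [B B_ge0 [D correction_le]] := edgeworth_correction_bound Poly r.
exists (2 * (mills * B * (k * c) ^+ D.+1 * D.+2`!%:R)),
  (mills * Num.sqrt (2 * pi * sigma2) * (k * c / (r%:R - c))).
move=> n x F eps n_gt1 x_ge1 x_le eps_ge0.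
have n_gt0 : 0 < n := lt_trans ltr01 n_gt1.
set s := Num.sqrt n; set S := \sum_(1 <= p < r.+1) s ^- p * (Poly p).[x].
have s_gt1 : 1 < s by rewrite -sqrtr1 ltr_sqrt.
have ln_n : ln n = 2 * ln s.
  by rewrite -[in LHS](sqr_sqrtr (ltW n_gt0)) lnXn ?sqrtr_gt0 // mulr_natl.
have x_sqr_le : x ^+ 2 <= k * c * ln s.
  have bound_ge0 : 0 <= c * sigma2 * ln n by rewrite !mulr_ge0 ?ln_ge0 ?ltW.
  have -> : k * c * ln s = c * sigma2 * ln n by rewrite ln_n /k; ring.
  by rewrite -(sqr_sqrtr bound_ge0) lerXn2r // nnegrE ?sqrtr_ge0 // (le_trans ler01 x_ge1).
rewrite -mulr_suml -/S => remainder_le.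
have -> : 1 - (1 - F) / (1 - gauss_N sigma2 x) =
    S * gauss_n sigma2 x / (1 - gauss_N sigma2 x) +
    (F - gauss_N sigma2 x - S * gauss_n sigma2 x) / (1 - gauss_N sigma2 x).
  by field; rewrite gt_eqF // gauss_tail_gt0.
apply: le_trans (ler_normD _ _) _; apply: lerD.
  have -> : 2 * (mills * B * (k * c) ^+ D.+1 * D.+2`!%:R) / ln n =
      mills * B * (k * c) ^+ D.+1 * D.+2`!%:R / ln s.
    by rewrite ln_n; field; rewrite gt_eqF // ln_gt0.
  by apply: correction_tail_ratio_le => //; apply: correction_le => //; apply: ltW.
by apply: (remainder_tail_ratio_le s) => //; exact: lt_trans ltr01 s_gt1.
Qed.

End EdgeworthTailRatio.

Theorem proposition5p3 (d : measure_display) (T : measurableType d) (R : realType)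
  (P : probability T R) (X : nat -> {RV P >-> R}) (A sigma2 : R) (r : nat)
  (Poly : nat -> {poly R}) :
  0 < sigma2 ->
  has_edgeworth_expansion P (fun n => X n : T -> R) A sigma2 r Poly ->
  forall c : R, 0 < c -> c < r%:R ->
  forall x : nat -> R,
    (\forall N \near \oo, 1 <= x N /\ x N <= Num.sqrt (c * sigma2 * ln (N%:R))) ->
    (fun N => (1 - normalized_cdf P (fun n => X n : T -> R) A N (x N))
              / (1 - gauss_N sigma2 (x N))) @ \oo --> (1 : R).
Proof.
move=> sigma2_gt0 edgeworth c c_gt0 c_lt_r x x_range.
have [C1 [C2 ratio_le]] := edgeworth_tail_ratio_bound sigma2_gt0 c_gt0 c_lt_r Poly.
apply: (cvg_from_eps_bound C2 (cvg_div_ln C1)) => eps eps_gt0.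
near=> N.
have [x_ge1 x_le] : 1 <= x N /\ x N <= Num.sqrt (c * sigma2 * ln N%:R) by near: N.
apply: ratio_le => //.
- by rewrite ltr1n; near: N; exact: nbhs_infty_ge.
- exact: ltW.
- by near: N; apply: filterS (edgeworth _ eps_gt0) => N; apply.
Unshelve. all: by end_near.
Qed.
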